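(* Let $\mathrm{k}$ be an infinite field, $\mathcal{A}$ a unital associative $\mathrm{k}$-algebra satisfying $\mathbf{H}_{\mathrm{s}}$, $V$ a fixed finite-dimensional $\mathrm{k}$-subspace of $\mathcal{A}$ with $V\cap U(\mathcal{A})\neq\emptyset$, and $0<\lambda\leq1$ real. Then: (1) There exists a unique atom $\mathcal{H}_\lambda$ of $V$ containing $1$. (2) $\mathcal{H}_\lambda$ is a subalgebra of $\mathcal{A}$ containing $\mathcal{H}_l(V):=\{h\in\mathcal{A}\mid hV\subseteq V\}$. (3) The atoms of $V$ which intersect $U(\mathcal{A})$ are exactly the subspaces $x\mathcal{H}_\lambda$ with $x\in U(\mathcal{A})$. (4) For every finite-dimensional $\mathrm{k}$-subspace $W$ of $\mathcal{A}$ with $W\cap U(\mathcal{A})\neq\emptyset$, $\dim_{\mathrm{k}}(\mathrm{k}\langle WV\rangle)\geq\lambda\dim_{\mathrm{k}}(W)+\dim_{\mathrm{k}}(V)-\lambda\dim_{\mathrm{k}}(\mathcal{H}_\lambda)$.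
   Context: Algebras are unital associative, subalgebras contain $1$; $U(\mathcal{A})$ is the group of invertible elements; $\mathrm{k}\langle S\rangle$ is linear span, $\dim_{\mathrm{k}}(S)=\dim_{\mathrm{k}}\mathrm{k}\langle S\rangle$, $ST=\{st\mid s\in S,t\in T\}$. Hypothesis $\mathbf{H}_{\mathrm{s}}$: $\mathcal{A}$ is finite-dimensional over $\mathrm{k}$, or $\mathrm{k}\in\{\mathbb{R},\mathbb{C}\}$ and $\mathcal{A}$ is a Banach algebra over $\mathrm{k}$, or $\mathcal{A}$ is a finite product of field extensions of $\mathrm{k}$. Connectivity: for a finite-dimensional subspace $W$ set $c(W):=\dim_{\mathrm{k}}(\mathrm{k}\langle WV\rangle)-\lambda\dim_{\mathrm{k}}(W)$. Let $\kappa$ be the infimum of $c(W)$ over all finite-dimensional subspaces $W$ with $W\cap U(\mathcal{A})\neq\emptyset$. A fragment of $V$ is such a subspace $W$ (finite-dimensional, meeting $U(\mathcal{A})$) with $c(W)=\kappa$; an atom of $V$ is a fragment of minimal dimension. *)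

From HB Require Import structures.
From mathcomp Require Import all_boot all_order all_algebra.
From mathcomp Require Import boolp classical_sets reals.
From mathcomp Require Import complex.
Set Implicit Arguments. Unset Strict Implicit. Unset Printing Implicit Defensive.
Import Order.TTheory GRing.Theory Num.Theory.
Local Open Scope classical_set_scope.
Local Open Scope ring_scope.

Section Defs.
Variables (k : fieldType) (A : algType k).

Definition infinite_field (F : fieldType) : Prop :=
  forall s : seq F, exists x : F, x \notin s.

Definition isunit (x : A) : Prop := exists y : A, x * y = 1 /\ y * x = 1.

Definition span (S : set A) : set A :=
  [set x | exists (n : nat) (v : 'I_n -> A) (c : 'I_n -> k),
     (forall i, S (v i)) /\ x = \sum_(i < n) c i *: v i].

Definition fdsub (W : set A) : Prop :=
  exists (n : nat) (v : 'I_n -> A), W = span (range v).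

(* dim_k(S) = dim_k k<S> : the least size of a finite family spanning k<S>
   (0 by convention if k<S> is not finite-dimensional; never used then) *)
Definition spans_with (S : set A) (n : nat) : Prop :=
  exists v : 'I_n -> A, span S = span (range v).

Definition dimk (S : set A) : nat :=
  match pselect (exists n, spans_with S n) with
  | left H => ex_minn (P := fun n => `[< spans_with S n >])
                (let: ex_intro n Hn := H in ex_intro _ n (asboolT Hn))
  | right _ => 0%N
  end.

Definition setmul (S T : set A) : set A :=
  [set z | exists s t, S s /\ T t /\ z = s * t].

Definition meets_units (W : set A) : Prop := exists x, W x /\ isunit x.

Definition admissible (W : set A) : Prop := fdsub W /\ meets_units W.

Variable R : realType.

Definition conn (V : set A) (lambda : R) (W : set A) : R :=
  (dimk (setmul W V))%:R - lambda * (dimk W)%:R.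

Definition kappa (V : set A) (lambda : R) : R :=
  inf [set conn V lambda W | W in admissible].

Definition fragment (V : set A) (lambda : R) (W : set A) : Prop :=
  admissible W /\ conn V lambda W = kappa V lambda.

Definition atom (V : set A) (lambda : R) (W : set A) : Prop :=
  fragment V lambda W /\
  forall W', fragment V lambda W' -> (dimk W <= dimk W')%N.

Definition Hl (V : set A) : set A := [set h | forall v, V v -> V (h * v)].

Definition subalgebra (H : set A) : Prop :=
  [/\ H 0, H 1, (forall x y, H x -> H y -> H (x + y)),
      (forall (a : k) x, H x -> H (a *: x)) &
      (forall x y, H x -> H y -> H (x * y))].

Definition Hs_findim : Prop := exists (n : nat) (v : 'I_n -> A), span (range v) = setT.

Definition banach_norm (absk : k -> R) : Prop :=
  exists N : A -> R,
  [/\ (forall x, 0 <= N x) /\ (forall x, N x = 0 <-> x = 0),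
      (forall x y, N (x + y) <= N x + N y),
      (forall (a : k) x, N (a *: x) = absk a * N x),
      (forall x y, N (x * y) <= N x * N y) &
      (forall u : nat -> A,
         (forall e : R, 0 < e -> exists M, forall m n, (M <= m)%N -> (M <= n)%N ->
             N (u m - u n) < e) ->
         exists l : A, forall e : R, 0 < e -> exists M, forall n, (M <= n)%N ->
             N (u n - l) < e)].

Definition absC (z : R[i]) : R := Num.sqrt (complex.Re z ^+ 2 + complex.Im z ^+ 2).

Definition Hs_banach : Prop :=
  (exists f : {rmorphism k -> R}, bijective f /\ banach_norm (fun a => `|f a|))
  \/ (exists f : {rmorphism k -> R[i]}, bijective f /\ banach_norm (fun a => absC (f a))).

Definition Hs_prodfields : Prop :=
  exists (n : nat) (L : 'I_n -> fieldType)
         (iota : forall i, {rmorphism k -> L i})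
         (phi : A -> forall i, L i),
  [/\ bijective phi,
      phi 1 = (fun i => 1),
      (forall x y, phi (x + y) = (fun i => phi x i + phi y i)),
      (forall x y, phi (x * y) = (fun i => phi x i * phi y i)) &
      (forall (a : k) x, phi (a *: x) = (fun i => iota i a * phi x i))].

Definition Hs : Prop := [\/ Hs_findim, Hs_banach | Hs_prodfields].

End Defs.

From Pilot Require Import Defs.
From HB Require Import structures.
From mathcomp Require Import all_boot all_order all_algebra.
From mathcomp Require Import boolp classical_sets reals.
From mathcomp Require Import zify lra ring.
Import Order.TTheory GRing.Theory Num.Theory.
Local Open Scope classical_set_scope.
Local Open Scope ring_scope.
Set Implicit Arguments. Unset Strict Implicit. Unset Printing Implicit Defensive.

(* Dimension is modular and (X + Y)V = XV + YV, (X ∩ Y)V ⊆ XV ∩ YV, so the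
   connectivity c is submodular; hence two fragments sharing a unit u meet in a
   fragment (X + Y is admissible as well), and two atoms sharing a unit coincide.
   Left multiplication by a unit preserves dimensions and connectivity, so it
   permutes the atoms: the atom H through 1 is unique and the atoms meeting U(A)
   are the xH. Under H_s, for every h there is t in k with h + t a unit (h is
   algebraic in finite dimension, a Neumann series inverts 1 - sh for small s in
   a Banach algebra, and coordinatewise in a product of fields); for h in H this
   unit u lies in H, so uH = H and hence hH ⊆ H. Finally c(H) = kappa is minimal:
   adjoining Hh (h in Hl(V)) does not enlarge HV, so it cannot enlarge H, and
   c(W) >= c(H) >= dim V - lambda dim H gives (4).
   Dimensions are computed in coordinates: a subspace of the span of u_1..u_m is
   represented by the row space of the coefficient vectors of its elements. *)

Section Spans.
Variables (k : fieldType) (A : algType k).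
Implicit Types (S X Y : set A).
Local Notation span := (@Defs.span k A).

Definition subspace X := [/\ X 0, (forall x y, X x -> X y -> X (x + y)) &
   (forall (a : k) x, X x -> X (a *: x))].

Lemma subspace_sum X (I : Type) (r : seq I) (P : pred I) (F : I -> A) :
  subspace X -> (forall i, P i -> X (F i)) -> X (\sum_(i <- r | P i) F i).
Proof. by case=> X0 XD _ XF; apply: big_ind. Qed.

Lemma subspaceD X x y : subspace X -> X x -> X y -> X (x + y).
Proof. by case=> _ XD _; apply: XD. Qed.

Lemma subspaceZ X (a : k) x : subspace X -> X x -> X (a *: x).
Proof. by case=> _ _ XZ; apply: XZ. Qed.

Lemma subspaceB X x y : subspace X -> X x -> X y -> X (x - y).
Proof. by move=> sX Xx Xy; rewrite -scaleN1r; apply: subspaceD => //; apply: subspaceZ. Qed.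

Lemma subspace0 : subspace [set (0 : A)].
Proof. by split => [|x y -> ->|a x ->]; rewrite /= ?addr0 ?scaler0. Qed.

Lemma subspaceI X Y : subspace X -> subspace Y -> subspace (X `&` Y).
Proof.
move=> sX sY; split; first by split; [case: sX | case: sY].
  by move=> x y [Xx Yx] [Xy Yy]; split; apply: subspaceD.
by move=> a x [Xx Yx]; split; apply: subspaceZ.
Qed.

Lemma sub_span S : S `<=` span S.
Proof.
move=> x Sx; exists 1%N, (fun _ => x), (fun _ => 1); split => //.
by rewrite big_ord1 scale1r.
Qed.

Lemma subspace_span S : subspace (span S).
Proof.
split.
- by exists 0%N, (fun _ => 0), (fun _ => 0); split; [case | rewrite big_ord0].
- move=> x y [n1 [v1 [c1 [H1 ->]]]] [n2 [v2 [c2 [H2 ->]]]].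
  exists (n1 + n2)%N, (fun i => match split i with inl a => v1 a | inr b => v2 b end),
    (fun i => match split i with inl a => c1 a | inr b => c2 b end); split.
    by move=> i; case: (split i).
  rewrite big_split_ord /=; congr (_ + _); apply: eq_bigr => i _.
    by rewrite (unsplitK (inl _ i)).
  by rewrite (unsplitK (inr _ i)).
- move=> a x [n [v [c [H ->]]]]; exists n, v, (fun i => a * c i); split => //.
  by rewrite scaler_sumr; apply: eq_bigr => i _; rewrite scalerA.
Qed.

Lemma span_sub_subspace S X : subspace X -> S `<=` X -> span S `<=` X.
Proof.
move=> sX SX x [n [v [c [Sv ->]]]].
by apply: subspace_sum => // i _; apply: subspaceZ => //; apply: SX.
Qed.

Lemma span_id X : subspace X -> span X = X.
Proof. by move=> sX; apply/seteqP; split; [apply: span_sub_subspace | apply: sub_span]. Qed.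

Lemma span_span S : span (span S) = span S.
Proof. exact: span_id (subspace_span S). Qed.

Lemma span_rangeP (n : nat) (w : 'I_n -> A) x :
  span (range w) x <-> exists c : 'I_n -> k, x = \sum_(i < n) c i *: w i.
Proof.
split; last by move=> [c ->]; exists n, w, c; split => // i; exists i.
move: x; apply: span_sub_subspace; last first.
  move=> _ [j _ <-]; exists (fun i => (i == j)%:R).
  rewrite (bigD1 j) //= eqxx scale1r big1 ?addr0 // => i /negbTE ->.
  by rewrite scale0r.
split.
- by exists (fun _ => 0); rewrite big1 // => i _; rewrite scale0r.
- move=> x y [c1 ->] [c2 ->]; exists (fun i => c1 i + c2 i).
  by rewrite -big_split; apply: eq_bigr => i _; rewrite scalerDl.
- move=> a x [c ->]; exists (fun i => a * c i).
  by rewrite scaler_sumr; apply: eq_bigr => i _; rewrite scalerA.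
Qed.

Lemma span_setU_decomp X Y z : subspace X -> subspace Y -> span (X `|` Y) z ->
  exists x y, [/\ X x, Y y & z = x + y].
Proof.
move=> sX sY; move: z.
apply: (@span_sub_subspace _ [set z | exists x y, [/\ X x, Y y & z = x + y]]).
- split.
  + by exists 0, 0; rewrite addr0; split; [case: sX | case: sY |].
  + move=> _ _ [x1 [y1 [? ? ->]]] [x2 [y2 [? ? ->]]]; exists (x1 + x2), (y1 + y2).
    by split; [apply: subspaceD | apply: subspaceD | rewrite addrACA].
  + move=> a _ [x [y [? ? ->]]]; exists (a *: x), (a *: y).
    by split; [apply: subspaceZ | apply: subspaceZ | rewrite scalerDr].
- move=> z [Xz|Yz]; first by exists z, 0; rewrite addr0; split; case: sY.
  by exists 0, z; rewrite add0r; split; case: sX.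
Qed.

Lemma subspace_fdsub X : fdsub X -> subspace X.
Proof. by case=> n [v ->]; apply: subspace_span. Qed.

Lemma fdsub_span X : fdsub X -> fdsub (span X).
Proof. by move=> fX; rewrite span_id //; apply: subspace_fdsub. Qed.

Lemma dimk_le S n : spans_with S n -> (dimk S <= n)%N.
Proof.
move=> Sn; rewrite /dimk; case: pselect => [?|[]]; last by exists n.
by case: ex_minnP => m _; apply; apply: asboolT.
Qed.

Lemma spans_with_dimk S : fdsub (span S) -> spans_with S (dimk S).
Proof.
case=> n [v Sv]; rewrite /dimk; case: pselect => [?|[]]; last by exists n, v.
by case: ex_minnP => m /asboolP.
Qed.

Lemma dimk_span S : dimk (span S) = dimk S.
Proof.
suff E : spans_with (span S) = spans_with S by rewrite /dimk E.
by apply: funext => n; apply: propext; split => -[v Sv]; exists v;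
  rewrite -Sv ?span_span.
Qed.

End Spans.

Lemma rowspace_exists (k : fieldType) (m : nat) (Q : 'rV[k]_m -> Prop) :
  Q 0 -> (forall c d, Q c -> Q d -> Q (c + d)) -> (forall a c, Q c -> Q (a *: c)) ->
  exists P : 'M[k]_m, forall c, (c <= P)%MS <-> Q c.
Proof.
move=> Q0 QD QZ.
have Qsub (p : nat) (M : 'M_(p, m)) c : (forall j, Q (row j M)) -> (c <= M)%MS -> Q c.
  move=> QM /submxP [y ->]; rewrite mulmx_sum_row.
  by apply: big_ind => // j _; apply: QZ.
pose good n := `[< exists P : 'M[k]_m, (forall i, Q (row i P)) /\ \rank P = n >].
have good0 : exists n, good n.
  by exists 0%N; apply/asboolP; exists 0; rewrite mxrank0; split => // i; rewrite row0.
have good_le n : good n -> (n <= m)%N by move=> /asboolP [P [_ <-]]; apply: rank_leq_col.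
(* a maximal-rank matrix whose rows lie in [Q] spans all of [Q] *)
case: (ex_maxnP good0 good_le) => n /asboolP [P [QP rP]] maxP.
exists P => c; split; first exact: Qsub.
move=> Qc; apply/negPn/negP => ncP.
have QPc i : Q (row i (P + c)%MS).
  have /sub_addsmxP [[a b] /= ->] := row_sub i (P + c)%MS.
  apply: QD; first by apply: (Qsub _ P) => //; apply: submxMl.
  by apply: (Qsub _ c); [move=> j; rewrite row_id | apply: submxMl].
have := maxP _ (asboolT (ex_intro _ (P + c)%MS (conj QPc erefl))).
rewrite -rP; have := mxrank_leqif_sup (addsmxSl P c).
rewrite addsmx_sub submx_refl (negbTE ncP) => -[le eqF] ge.
by move: eqF; rewrite eqn_leq le ge.
Qed.

Section Coordinates.
Variables (k : fieldType) (A : algType k) (m : nat) (u : 'I_m -> A).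
Local Notation span := (@Defs.span k A).
Implicit Types (X : set A) (c d : 'rV[k]_m).

Definition lincomb c : A := \sum_i c 0 i *: u i.

Lemma lincombD c d : lincomb (c + d) = lincomb c + lincomb d.
Proof. by rewrite /lincomb -big_split; apply: eq_bigr => i _; rewrite mxE scalerDl. Qed.

Lemma lincombZ a c : lincomb (a *: c) = a *: lincomb c.
Proof. by rewrite /lincomb scaler_sumr; apply: eq_bigr => i _; rewrite mxE scalerA. Qed.

Lemma lincomb0 : lincomb 0 = 0.
Proof. by rewrite -(scale0r 0) lincombZ scale0r. Qed.

Lemma lincombB c d : lincomb (c - d) = lincomb c - lincomb d.
Proof. by rewrite lincombD -scaleN1r lincombZ scaleN1r. Qed.

Lemma lincomb_mulmx p (y : 'rV_p) (M : 'M_(p, m)) :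
  lincomb (y *m M) = \sum_j y 0 j *: lincomb (row j M).
Proof.
rewrite mulmx_sum_row; elim: (index_enum _) => [|j r IH]; first by rewrite !big_nil lincomb0.
by rewrite !big_cons lincombD lincombZ IH.
Qed.

Lemma span_range_lincomb x : span (range u) x <-> exists c, x = lincomb c.
Proof.
rewrite span_rangeP; split => -[c ->]; last by exists (fun i => c 0 i).
by exists (\row_i c i); apply: eq_bigr => i _; rewrite mxE.
Qed.

Definition represents (P : 'M[k]_m) X := forall c, (c <= P)%MS <-> X (lincomb c).

Lemma represents_exists X : subspace X -> exists P, represents P X.
Proof.
move=> sX; apply: rowspace_exists.
- by rewrite lincomb0; case: sX.
- by move=> c d Xc Xd; rewrite lincombD; apply: subspaceD.
- by move=> a c Xc; rewrite lincombZ; apply: subspaceZ.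
Qed.

Lemma represents_kernel : exists K, represents K [set 0].
Proof. exact: represents_exists (@subspace0 _ _). Qed.

Variables (K : 'M[k]_m) (X : set A) (P : 'M[k]_m).
Hypotheses (KP0 : represents K [set 0]) (sX : subspace X)
  (Xu : X `<=` span (range u)) (PX : represents P X).

Lemma represents_ker_sub : (K <= P)%MS.
Proof.
by apply/row_subP => i; apply/PX; rewrite (proj1 (KP0 _) (row_sub i K)); case: sX.
Qed.

Lemma represents_spanning :
  spans_with X (\rank P - \rank K) /\ fdsub X.
Proof.
pose D := (P :\: K)%MS; pose w i := lincomb (row i (row_base D)).
have rD : \rank D = (\rank P - \rank K)%N.
  by rewrite -(mxrank_cap_compl P K) (capmx_idPr represents_ker_sub).1 addKn.
suff EX : X = span (range w) by rewrite -rD; split; [exists w | exists (\rank D), w];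
  rewrite -?EX ?span_id.
apply/seteqP; split; last first.
  apply: span_sub_subspace => // _ [i _ <-]; apply/PX.
  by rewrite (submx_trans (row_sub i _)) // eq_row_base diffmxSl.
move=> x Xx; have [c Ec] := proj1 (span_range_lincomb x) (Xu Xx).
have : (c <= D + K)%MS.
  rewrite (submx_trans (_ : c <= P)%MS) //; first by apply/PX; rewrite -Ec.
  by rewrite -{1}(addsmx_diff_cap_eq P K) addsmxS ?capmxSr.
case/sub_addsmxP => -[a b] /= Ec2.
have /submxP [z Ez] : (a *m D <= row_base D)%MS by rewrite eq_row_base submxMl.
apply/span_rangeP; exists (fun j => z 0 j).
by rewrite Ec Ec2 lincombD (proj1 (KP0 _) (submxMl _ _)) addr0 Ez lincomb_mulmx.
Qed.

Lemma represents_dimk : dimk X = (\rank P - \rank K)%N.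
Proof.
have [Xspans fX] := represents_spanning.
apply/eqP; rewrite eqn_leq dimk_le //=.
have [v Xv] : spans_with X (dimk X) by apply: spans_with_dimk; apply: fdsub_span.
rewrite span_id // in Xv.
have /fin_all_exists [s vs] j : exists s, v j = lincomb s.
  by apply/span_range_lincomb; apply: Xu; rewrite Xv; apply: sub_span; exists j.
pose S := \matrix_j s j.
have PSK : (P <= S + K)%MS.
  apply/row_subP => i; set c := row i P.
  have /span_rangeP [a Ea] : span (range v) (lincomb c) by rewrite -Xv; apply/PX; apply: row_sub.
  pose ra := \row_j a j.
  have cSK : (c - ra *m S <= K)%MS.
    apply/KP0; apply/eqP; rewrite /= lincombB lincomb_mulmx Ea subr_eq0.
    by apply/eqP; apply: eq_bigr => j _; rewrite rowK mxE vs.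
  by rewrite -(subrK (ra *m S) c) addrC addmx_sub_adds ?submxMl.
rewrite leq_subLR; apply: leq_trans (mxrankS PSK) _.
apply: leq_trans (mxrank_adds_leqif S K).1 _.
by rewrite addnC leq_add2l rank_leq_row.
Qed.

End Coordinates.

Section Dimension.
Variables (k : fieldType) (A : algType k).
Implicit Types (S T X Y : set A).
Local Notation span := (@Defs.span k A).
Local Notation represents := (@represents k A _).

Lemma coordinates m (u : 'I_m -> A) K X : represents u K [set 0] ->
  subspace X -> X `<=` span (range u) ->
  exists P, [/\ represents u P X, dimk X = (\rank P - \rank K)%N & fdsub X].
Proof.
move=> KP0 sX Xu; have [P PX] := represents_exists u sX.
by exists P; split; [| apply: represents_dimk | case: (represents_spanning KP0 sX Xu PX)].
Qed.

Lemma represents_mono m (u : 'I_m -> A) P Q X Y :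
  represents u P X -> represents u Q Y -> X `<=` Y -> (P <= Q)%MS.
Proof. by move=> PX QY XY; apply/row_subP => i; apply/QY/XY/PX; apply: row_sub. Qed.

Lemma fdsub_subspace_sub X Y : subspace X -> fdsub Y -> X `<=` Y ->
  fdsub X /\ (dimk X <= dimk Y)%N.
Proof.
move=> sX fY XY; have sY := subspace_fdsub fY.
case: fY => m [u Yu]; have [K KP0] := represents_kernel u.
have Yu' : Y `<=` span (range u) by rewrite Yu.
have [P [PX -> fX]] := coordinates KP0 sX (subset_trans XY Yu').
have [Q [QY -> _]] := coordinates KP0 sY Yu'.
by split => //; rewrite leq_sub2r // mxrankS // (represents_mono PX QY).
Qed.

Lemma subspace_eq_dimk X Y : subspace X -> fdsub Y -> X `<=` Y ->
  (dimk Y <= dimk X)%N -> X = Y.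
Proof.
move=> sX fY XY le; have sY := subspace_fdsub fY.
case: fY => m [u Yu]; have [K KP0] := represents_kernel u.
have Yu' : Y `<=` span (range u) by rewrite Yu.
have [P [PX dX _]] := coordinates KP0 sX (subset_trans XY Yu').
have [Q [QY dY _]] := coordinates KP0 sY Yu'.
have PQ := represents_mono PX QY XY.
have QP : (Q <= P)%MS.
  rewrite -(mxrank_leqif_sup PQ).2 eqn_leq mxrankS //=.
  by move: le; rewrite dX dY; have := mxrankS (represents_ker_sub KP0 sX PX); lia.
apply/seteqP; split => // y Yy; have [c Ec] := proj1 (span_range_lincomb u y) (Yu' y Yy).
by rewrite Ec; apply/PX; rewrite (submx_trans _ QP) //; apply/QY; rewrite -Ec.
Qed.

Lemma common_spanning_family X Y : fdsub X -> fdsub Y ->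
  exists m (u : 'I_m -> A), X `<=` span (range u) /\ Y `<=` span (range u).
Proof.
case=> m1 [v1 ->] [m2 [v2 ->]].
pose u i := match split i with inl a => v1 a | inr b => v2 b end.
exists (m1 + m2)%N, u; split; apply: span_sub_subspace (subspace_span _) _.
  by move=> _ [a _ <-]; apply: sub_span; exists (lshift m2 a); rewrite // /u (unsplitK (inl _ a)).
by move=> _ [a _ <-]; apply: sub_span; exists (rshift m1 a); rewrite // /u (unsplitK (inr _ a)).
Qed.

Lemma dimk_modular X Y : fdsub X -> fdsub Y ->
  [/\ fdsub (X `&` Y), fdsub (span (X `|` Y)) &
      (dimk (X `&` Y) + dimk (span (X `|` Y)) = dimk X + dimk Y)%N].
Proof.
move=> fX fY; have sX := subspace_fdsub fX; have sY := subspace_fdsub fY.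
have [m [u [Xu Yu]]] := common_spanning_family fX fY.
have [K KP0] := represents_kernel u.
have [P [PX dX _]] := coordinates KP0 sX Xu.
have [Q [QY dY _]] := coordinates KP0 sY Yu.
have sI := subspaceI sX sY; have sU := subspace_span (X `|` Y).
have PQI : represents u (P :&: Q)%MS (X `&` Y).
  by move=> c; rewrite sub_capmx; split => [/andP [/PX ? /QY ?]|[/PX -> /QY ->]].
have PQU : represents u (P + Q)%MS (span (X `|` Y)).
  move=> c; split.
    case/sub_addsmxP => -[a b] /= ->; rewrite lincombD.
    by apply: subspaceD => //; apply: sub_span; [left; apply/PX | right; apply/QY];
      apply: submxMl.
  case/(span_setU_decomp sX sY) => x [y [Xx Yy Ec]].
  have [a Ea] := proj1 (span_range_lincomb u x) (Xu x Xx).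
  have [b Eb] := proj1 (span_range_lincomb u y) (Yu y Yy).
  have cK : (c - b - a <= K)%MS.
    by apply/KP0; apply/eqP; rewrite /= !lincombB Ec -Ea -Eb addrK subrr.
  have -> : c = c - b - a + a + b by rewrite !subrK.
  apply: addmx_sub_adds; last by apply/QY; rewrite -Eb.
  rewrite addmx_sub //; last by apply/PX; rewrite -Ea.
  exact: submx_trans cK (represents_ker_sub KP0 sX PX).
have UXY : span (X `|` Y) `<=` span (range u).
  by apply: span_sub_subspace; [apply: subspace_span | move=> x [/Xu|/Yu]].
have [dI fI] := (represents_dimk KP0 sI (subset_trans (@subIsetl _ X Y) Xu) PQI,
                 (represents_spanning KP0 sI (subset_trans (@subIsetl _ X Y) Xu) PQI).2).
have [dU fU] := (represents_dimk KP0 sU UXY PQU, (represents_spanning KP0 sU UXY PQU).2).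
split => //; rewrite dI dU dX dY.
have := mxrank_sum_cap P Q; have := mxrankS (represents_ker_sub KP0 sI PQI).
have := mxrankS (capmxSl P Q); have := mxrankS (capmxSr P Q).
have := mxrankS (addsmxSl P Q).
lia.
Qed.

Lemma dimk_mono S T : fdsub (span T) -> S `<=` span T ->
  fdsub (span S) /\ (dimk S <= dimk T)%N.
Proof.
move=> fT ST; rewrite -(dimk_span S) -(dimk_span T).
apply: fdsub_subspace_sub (subspace_span S) fT _.
exact: span_sub_subspace (subspace_span T) ST.
Qed.
End Dimension.

Section LinearImages.
Variables (k : fieldType) (A : algType k).
Implicit Types (S W V : set A) (g : A -> A).
Local Notation span := (@Defs.span k A).

Definition linear_map g :=
  (forall x y, g (x + y) = g x + g y) /\ (forall (a : k) x, g (a *: x) = a *: g x).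

Lemma linear_map_mull x : linear_map ( *%R x).
Proof. by split => [a b|a b]; rewrite ?mulrDr ?scalerAr. Qed.

Lemma linear_map_mulr x : linear_map ( *%R^~ x).
Proof. by split => [a b|a b]; rewrite ?mulrDl ?scalerAl. Qed.

Lemma span_image g S : linear_map g -> span (g @` S) = g @` span S.
Proof.
case=> gD gZ; have g0 : g 0 = 0 by apply: (addrI (g 0)); rewrite -gD !addr0.
have sS := subspace_span S; apply/seteqP; split.
  apply: span_sub_subspace; last by move=> _ [x Sx <-]; exists x => //; apply: sub_span.
  split; first by exists 0; [case: sS | apply: g0].
    by move=> _ _ [x Sx <-] [y Sy <-]; exists (x + y); rewrite ?gD //; apply: subspaceD.
  by move=> a _ [x Sx <-]; exists (a *: x); rewrite ?gZ //; apply: subspaceZ.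
move=> _ [x [n [v [c [Sv ->]]]] <-].
rewrite (big_morph g gD g0); apply: subspace_sum (subspace_span _) _ => i _.
by rewrite gZ; apply: subspaceZ (subspace_span _) _; apply: sub_span; exists (v i).
Qed.

Lemma dimk_image g S : linear_map g -> fdsub (span S) ->
  fdsub (span (g @` S)) /\ (dimk (g @` S) <= dimk S)%N.
Proof.
move=> lg fS; have [v Sv] := spans_with_dimk fS.
have gSv : span (g @` S) = span (range (g \o v)).
  by rewrite span_image // Sv -span_image // image_comp.
by split; [exists (dimk S), (g \o v) | apply: dimk_le; exists (g \o v)].
Qed.

Lemma dimk_image_can g g' S : linear_map g -> linear_map g' -> cancel g g' ->
  fdsub (span S) -> dimk (g @` S) = dimk S.
Proof.
move=> lg lg' gK fS; have [fgS le1] := dimk_image lg fS.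
have g'gS : g' @` (g @` S) = S.
  rewrite image_comp; apply/seteqP.
  by split => [_ [x Sx <-]|x Sx]; [rewrite /= gK | exists x; rewrite /= ?gK].
have [_] := dimk_image lg' fgS; rewrite g'gS => le2.
by apply/eqP; rewrite eqn_leq le1.
Qed.

Lemma fdsub_setmul W V : fdsub W -> fdsub V -> fdsub (span (setmul W V)).
Proof.
case=> n1 [w ->] [n2 [v ->]].
pose F (p : 'I_n1 * 'I_n2) := w p.1 * v p.2.
have fF : fdsub (span (range F)).
  exists #|{: 'I_n1 * 'I_n2}|, (F \o enum_val); congr span.
  apply/seteqP; split => _ [i _ <-]; last by exists (enum_val i).
  by exists (enum_rank i); rewrite //= enum_rankK.
apply: (dimk_mono fF _).1 => _ [s [t [/span_rangeP [a ->] [/span_rangeP [b ->] ->]]]].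
rewrite mulr_suml; apply: subspace_sum (subspace_span _) _ => i _.
rewrite mulr_sumr; apply: subspace_sum (subspace_span _) _ => j _.
rewrite -scalerAl -scalerAr scalerA; apply: subspaceZ (subspace_span _) _.
by apply: sub_span; exists (i, j).
Qed.

End LinearImages.

Lemma min_exists_of_finite_below d (T : orderType d) (P : T -> Prop) (x0 : T) (L : seq T) :
  P x0 -> (forall y, P y -> (y <= x0)%O -> y \in L) ->
  exists2 m, P m & forall y, P y -> (m <= y)%O.
Proof.
move=> Px0 PL.
have ordL y : y \in L -> (index y L < size L)%N by rewrite index_mem.
pose i0 := Ordinal (ordL _ (PL _ Px0 (lexx x0))).
pose Q (i : 'I_(size L)) := `[< P (nth x0 L i) >].
have Qi0 : Q i0 by apply/asboolP; rewrite nth_index // PL.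
case: (@arg_minP _ T _ i0 Q (fun i => nth x0 L i) Qi0) => i /asboolP Pi imin.
exists (nth x0 L i) => // y Py; have [yx0|x0y] := leP y x0.
  have yL := PL _ Py yx0; rewrite -(nth_index x0 yL).
  by apply: (imin (Ordinal (ordL _ yL))); apply/asboolP; rewrite /= nth_index.
by apply: le_trans (imin i0 Qi0) _; rewrite /= nth_index ?PL // ltW.
Qed.

Section Units.
Variables (k : fieldType) (A : algType k).
Implicit Types (x y : A) (S W V : set A).
Local Notation span := (@Defs.span k A).

Lemma isunit1 : @isunit k A 1.
Proof. by exists 1; rewrite mulr1. Qed.

Lemma isunitM x y : isunit x -> isunit y -> isunit (x * y).
Proof.
move=> [x' [xx' x'x]] [y' [yy' y'y]]; exists (y' * x'); split.
  by rewrite mulrA -(mulrA x) yy' mulr1 xx'.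
by rewrite mulrA -(mulrA y') x'x mulr1 y'y.
Qed.

Lemma isunit_inv x : isunit x -> exists2 y, isunit y & y * x = 1 /\ x * y = 1.
Proof. by move=> [y [xy yx]]; exists y => //; exists x. Qed.

Lemma dimk_lmul_unit x S : isunit x -> fdsub (span S) -> dimk [set x * h | h in S] = dimk S.
Proof.
move=> [y [xy yx]]; apply: dimk_image_can (linear_map_mull _) (linear_map_mull y) _.
by move=> h; rewrite mulrA yx mul1r.
Qed.

Lemma dimk_rmul_unit x S : isunit x -> fdsub (span S) -> dimk [set h * x | h in S] = dimk S.
Proof.
move=> [y [xy yx]]; apply: dimk_image_can (linear_map_mulr _) (linear_map_mulr y) _.
by move=> h; rewrite -mulrA xy mulr1.
Qed.

Lemma fdsub_image (g : A -> A) W : linear_map g -> fdsub W -> fdsub (g @` W).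
Proof.
move=> lg fW; have [+ _] := dimk_image lg (fdsub_span fW).
by rewrite span_image ?span_id //; apply: subspace_fdsub.
Qed.

Lemma admissible_lmul x W : isunit x -> admissible W -> admissible [set x * h | h in W].
Proof.
move=> ux [fW [w [Ww uw]]]; split; first exact: fdsub_image (linear_map_mull x) fW.
by exists (x * w); split; [exists w | apply: isunitM].
Qed.

Lemma setmul_lmul x W V : setmul [set x * h | h in W] V = [set x * h | h in setmul W V].
Proof.
apply/seteqP; split.
  by move=> _ [_ [t [[h Wh <-] [Vt ->]]]]; exists (h * t); [exists h, t | rewrite mulrA].
by move=> _ [_ [h [t [Wh [Vt ->]]]] <-]; exists (x * h), t; rewrite mulrA; split => //; exists h.
Qed.

End Units.

Section Connectivity.
Variables (k : fieldType) (A : algType k) (R : realType) (V : set A) (lambda : R).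
Hypotheses (fV : fdsub V) (uV : meets_units V) (lambda_le1 : lambda <= 1).
Implicit Types (W X Y : set A).
Local Notation span := (@Defs.span k A).
Local Notation conn := (@conn k A R V lambda).
Local Notation kappa := (@kappa k A R V lambda).

Lemma dimk_le_setmul W : fdsub W -> (dimk W <= dimk (setmul W V))%N.
Proof.
move=> fW; have [v [Vv uv]] := uV.
rewrite -(dimk_rmul_unit uv (fdsub_span fW)).
apply: (dimk_mono (fdsub_setmul fW fV) _).2 => _ [h Wh <-].
by apply: sub_span; exists h, v.
Qed.

Lemma conn_ge0 W : admissible W -> 0 <= conn W.
Proof.
case=> fW _; have := dimk_le_setmul fW; rewrite -(ler_nat R) /Defs.conn.
have := ler0n R (dimk W); have := lambda_le1; nra.
Qed.

Lemma conn_lmul x W : isunit x -> admissible W -> conn [set x * h | h in W] = conn W.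
Proof.
move=> ux [fW _]; rewrite /Defs.conn setmul_lmul.
by rewrite !dimk_lmul_unit //; [apply: fdsub_span | apply: fdsub_setmul].
Qed.

Lemma conn_values_below_finite : exists L : seq R,
  forall W, admissible W -> conn W <= conn V -> conn W \in L.
Proof.
have c0 : 0 <= conn V by apply: conn_ge0.
set c := conn V in c0 *.
have [l_eq|lt1] := eqVneq lambda 1.
  exists [seq (i%:R : R) | i <- iota 0 (Num.bound c)] => W [fW _] cW.
  have E : conn W = (dimk (setmul W V) - dimk W)%:R.
    by rewrite /Defs.conn l_eq mul1r natrB // dimk_le_setmul.
  rewrite E; apply: map_f; rewrite mem_iota /= -(ltr_nat R) -E.
  exact: le_lt_trans cW (archi_boundP c0).
(* for lambda < 1 both dimensions are bounded by c / (1 - lambda) + c *)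
have l1 : 0 < 1 - lambda by rewrite subr_gt0 lt_neqAle lt1.
pose y := c / (1 - lambda) + c.
have y0 : 0 <= y by rewrite addr_ge0 // divr_ge0 // ltW.
pose N := Num.bound y; have yN := archi_boundP y0.
exists [seq (a%:R : R) - lambda * b%:R | a <- iota 0 N, b <- iota 0 N] => W [fW _].
have := dimk_le_setmul fW; rewrite -(ler_nat R) /Defs.conn.
set a := dimk (setmul W V); set b := dimk W => ab cW.
have b_le : (b%:R : R) <= c / (1 - lambda).
  by rewrite ler_pdivlMr // mulrBr mulr1 mulrC; lra.
have lb_le : lambda * b%:R <= b%:R by rewrite ler_piMl ?ler0n.
apply: (allpairs_f (fun a b : nat => (a%:R : R) - lambda * b%:R));
  rewrite mem_iota /= -(ltr_nat R); apply: le_lt_trans yN; rewrite /y; lra.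
Qed.

Lemma kappa_attained : exists2 W0, admissible W0 & kappa = conn W0.
Proof.
have [L HL] := conn_values_below_finite.
pose C := [set conn W | W in @admissible k A].
have CV : C (conn V) by exists V.
have CL y : C y -> y <= conn V -> y \in L by case=> W aW <-; apply: HL.
have [_ [W0 aW0 <-] W0min] := min_exists_of_finite_below CV CL.
have lbW0 : lbound C (conn W0) by move=> _ [W aW <-]; apply: W0min; exists W.
exists W0 => //; apply/eqP; rewrite eq_le; apply/andP; split.
  by apply: ge_inf; [exists (conn W0) | exists W0].
by apply: lb_le_inf => //; exists (conn W0), W0.
Qed.

Lemma kappa_le_conn W : admissible W -> kappa <= conn W.
Proof.
move=> aW; apply: ge_inf; last by exists W.
by exists 0 => _ [W' aW' <-]; apply: conn_ge0.
Qed.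

Local Notation fragment := (@fragment k A R V lambda).
Local Notation atom := (@atom k A R V lambda).

Lemma fragmentI X Y u : fragment X -> fragment Y -> X u -> Y u -> isunit u ->
  fragment (X `&` Y).
Proof.
move=> [[fX _] cX] [[fY _] cY] Xu Yu uu.
have sX := subspace_fdsub fX; have sY := subspace_fdsub fY.
have [fI fU dXY] := dimk_modular fX fY.
set SX := span (setmul X V); set SY := span (setmul Y V).
have fSX : fdsub SX by apply: fdsub_setmul.
have fSY : fdsub SY by apply: fdsub_setmul.
have [fSI fSU dS] := dimk_modular fSX fSY.
have dI : (dimk (setmul (X `&` Y) V) <= dimk (SX `&` SY))%N.
  have sI : subspace (SX `&` SY) by apply: subspaceI; apply: subspace_span.
  apply: (dimk_mono _ _).2; first by rewrite span_id.
  rewrite span_id // => _ [s [t [[Xs Ys] [Vt ->]]]].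
  by split; apply: sub_span; exists s, t.
have dU : (dimk (setmul (span (X `|` Y)) V) <= dimk (span (SX `|` SY)))%N.
  apply: (dimk_mono _ _).2; first by rewrite span_span.
  rewrite span_span => _ [s [t [Us [Vt ->]]]].
  have [x [y [Xx Yy ->]]] := span_setU_decomp sX sY Us.
  rewrite mulrDl; apply: subspaceD (subspace_span _) _ _; apply: sub_span.
    by left; apply: sub_span; exists x, t.
  by right; apply: sub_span; exists y, t.
have aI : admissible (X `&` Y) by split => //; exists u.
have aU : admissible (span (X `|` Y)).
  by split => //; exists u; split => //; apply: sub_span; left.
split => //; apply/eqP; rewrite eq_le kappa_le_conn // andbT.
have := kappa_le_conn aU; move: cX cY; rewrite /Defs.conn => cX cY cU.
have : (dimk (setmul (X `&` Y) V) + dimk (setmul (span (X `|` Y)) V) <=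
        dimk (setmul X V) + dimk (setmul Y V))%N.
  by rewrite -(dimk_span (setmul X V)) -(dimk_span (setmul Y V)) -dS leq_add.
have : lambda * (dimk (X `&` Y))%:R + lambda * (dimk (span (X `|` Y)))%:R =
       lambda * (dimk X)%:R + lambda * (dimk Y)%:R by rewrite -!mulrDr -!natrD dXY.
rewrite -(ler_nat R) !natrD; lra.
Qed.

Lemma atom_unique X Y u : atom X -> atom Y -> X u -> Y u -> isunit u -> X = Y.
Proof.
move=> [frX minX] [frY minY] Xu Yu uu.
have frI := fragmentI frX frY Xu Yu uu.
have [[[fX _] _] [[fY _] _] [[fI _] _]] := And3 frX frY frI.
rewrite -(subspace_eq_dimk (subspace_fdsub fI) fX (@subIsetl _ X Y) (minX _ frI)).
exact: subspace_eq_dimk (subspace_fdsub fI) fY (@subIsetr _ X Y) (minY _ frI).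
Qed.

Lemma atom_lmul x X : isunit x -> atom X -> atom [set x * h | h in X].
Proof.
move=> ux [[aX cX] minX]; split; first by split; [apply: admissible_lmul | rewrite conn_lmul].
by move=> W frW; rewrite dimk_lmul_unit ?minX //; apply: fdsub_span; case: aX.
Qed.

Lemma atom_exists : exists X, atom X.
Proof.
have [W0 aW0 kW0] := kappa_attained.
pose good n := `[< exists W, fragment W /\ dimk W = n >].
have [|n /asboolP [X [frX <-]] nmin] := @ex_minnP good.
  by exists (dimk W0); apply/asboolP; exists W0.
by exists X; split => // W frW; apply: nmin; apply/asboolP; exists W.
Qed.

Lemma atom1_exists : exists2 H, atom H & H 1.
Proof.
have [X atX] := atom_exists; have [[[_ [x [Xx [y [xy yx]]]]] _] _] := atX.
by exists [set y * h | h in X]; [apply: atom_lmul => //; exists x | exists x].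
Qed.

Variable H : set A.
Hypotheses (atH : atom H) (H1 : H 1).

Lemma atom1_unique H' : atom H' -> H' 1 -> H' = H.
Proof. by move=> atH' H'1; apply: atom_unique atH' atH H'1 H1 (@isunit1 k A). Qed.

Lemma atom1_lmul_unit u : isunit u -> H u -> [set u * h | h in H] = H.
Proof.
move=> uu Hu; apply: atom_unique (atom_lmul uu atH) atH _ Hu uu.
by exists 1; rewrite ?mulr1.
Qed.

Lemma atom1_subalgebra : (forall h : A, exists t : k, isunit (h + t%:A)) ->
  subalgebra H.
Proof.
move=> shift; have [[[fH _] _] _] := atH; have sH := subspace_fdsub fH.
split => //; try by case: sH.
(* [a + t] is a unit of [H], so it maps [H] onto itself *)
move=> a b Ha Hb; have [t ut] := shift a.
have Hu : H (a + t%:A) by apply: subspaceD => //; apply: subspaceZ.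
have Hub : H ((a + t%:A) * b) by rewrite -(atom1_lmul_unit ut Hu); exists b.
have -> : a * b = (a + t%:A) * b - t *: b by rewrite mulrDl -scalerAl mul1r addrK.
by apply: subspaceB => //; apply: subspaceZ.
Qed.

Lemma Hl_sub_atom1 : 0 < lambda -> Hl V `<=` H.
Proof.
move=> lambda_gt0 h Hlh; have [[[fH _] cH] _] := atH; have sH := subspace_fdsub fH.
have fHh : fdsub [set z * h | z in H] := fdsub_image (linear_map_mulr h) fH.
pose K := span (H `|` [set z * h | z in H]).
have [_ fK _] := dimk_modular fH fHh.
have aK : admissible K by split => //; exists 1; split; [apply: sub_span; left | apply: isunit1].
have KV : setmul K V `<=` span (setmul H V).
  move=> _ [s [t [Ks [Vt ->]]]].
  have [a [_ [Ha [c Hc <-] ->]]] := span_setU_decomp sH (subspace_fdsub fHh) Ks.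
  rewrite mulrDl -mulrA; apply: subspaceD (subspace_span _) _ _; apply: sub_span.
    by exists a, t.
  by exists c, (h * t); split => //; split => //; apply: Hlh.
have [_ dKV] := dimk_mono (fdsub_setmul fH fV) KV.
have dK : (dimk K <= dimk H)%N.
  rewrite -(ler_nat R) -(ler_pM2l lambda_gt0); move: dKV; rewrite -(ler_nat R).
  by have := kappa_le_conn aK; rewrite -cH /Defs.conn; lra.
rewrite (subspace_eq_dimk sH fK _ dK) => [|z Hz]; last by apply: sub_span; left.
by apply: sub_span; right; exists 1; rewrite ?mul1r.
Qed.

Lemma atom_meets_unitsP X :
  atom X /\ meets_units X <-> exists x, isunit x /\ X = [set x * h | h in H].
Proof.
split; last first.
  move=> [x [ux ->]]; split; first exact: atom_lmul.
  by exists x; split => //; exists 1; rewrite ?mulr1.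
move=> [atX [x [Xx /isunit_inv [y uy [yx xy]]]]]; exists x; split; first by exists y.
rewrite -(atom1_unique (atom_lmul uy atX)); last by exists x.
rewrite image_comp; apply/seteqP; split => [z Xz|_ [z Xz <-]]; last by rewrite /= mulrA xy mul1r.
by exists z; rewrite //= mulrA xy mul1r.
Qed.

Lemma dimk_setmul_lower_bound W : admissible W ->
  lambda * (dimk W)%:R + (dimk V)%:R - lambda * (dimk H)%:R <= (dimk (setmul W V))%:R.
Proof.
move=> aW; have [[[fH _] cH] _] := atH.
have [_] : fdsub (span V) /\ (dimk V <= dimk (setmul H V))%N.
  apply: dimk_mono (fdsub_setmul fH fV) _ => v Vv.
  by apply: sub_span; exists 1, v; rewrite mul1r.
by rewrite -(ler_nat R); have := kappa_le_conn aW; rewrite -cH /Defs.conn; lra.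
Qed.

End Connectivity.

Lemma infinite_field_uniq_seq (F : fieldType) : infinite_field F ->
  forall n, exists2 s : seq F, uniq s & size s = n.
Proof.
move=> inf; elim=> [|n [s us ss]]; first by exists [::].
by have [x xs] := inf s; exists (x :: s); rewrite /= ?xs ?us ?ss.
Qed.

Lemma infinite_field_nonroot (F : fieldType) (P : {poly F}) : infinite_field F ->
  P != 0 -> exists x, ~~ root P x.
Proof.
move=> inf nzP; have [s us ss] := infinite_field_uniq_seq inf (size P).
have [allr|/allPn [x _ nr]] := boolP (all (root P) s); last by exists x.
by have := max_poly_roots nzP allr us; rewrite ss ltnn.
Qed.

Section UnitShift.
Variables (k : fieldType) (A : algType k).
Local Notation span := (@Defs.span k A).

Lemma span_dependent (n : nat) (u : 'I_n -> A) (p : 'I_n.+1 -> A) :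
  (forall j, span (range u) (p j)) ->
  exists c : 'I_n.+1 -> k, (exists j, c j != 0) /\ \sum_j c j *: p j = 0.
Proof.
move=> pu; have /fin_all_exists [s ps] j : exists s, p j = lincomb u s.
  exact/span_range_lincomb.
pose S := \matrix_j s j.
have : kermx S != 0.
  rewrite kermx_eq0 /row_free; apply: contraTneq (rank_leq_col S) => ->.
  by rewrite ltnn.
case/matrix0Pn => i [j nzij]; pose y := row i (kermx S).
have yS : y *m S = 0 by apply/sub_kermxP; apply: row_sub.
exists (fun j => y 0 j); split; first by exists j; rewrite mxE.
rewrite -[in RHS](lincomb0 u) -yS lincomb_mulmx.
by apply: eq_bigr => j' _; rewrite rowK ps.
Qed.

Lemma algebraic_of_findim : Hs_findim A ->
  forall h : A, exists2 P : {poly k}, P != 0 & horner_alg h P = 0.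
Proof.
move=> [n [u Eu]] h.
have [|c [[j0 nzc] Ec]] := @span_dependent n u (fun j => h ^+ j); first by rewrite Eu.
exists (\sum_(j < n.+1) c j *: 'X^j).
  apply: contraNneq nzc => /(congr1 (coefp j0)); rewrite /= coef0 coef_sum => <-.
  rewrite (bigD1 j0) //= coefZ coefXn eqxx mulr1 big1 ?addr0 // => j nj.
  by rewrite coefZ coefXn (inj_eq val_inj) eq_sym (negbTE nj) mulr0.
rewrite rmorph_sum; apply: etrans _ Ec; apply: eq_bigr => j _.
by rewrite -mul_polyC rmorphM /= horner_algC rmorphXn /= horner_algX mulr_algl.
Qed.

(* Writing [P - P(x) = ('X - x) Q], evaluation at [h] gives
   [(h - x) Q(h) = Q(h) (h - x) = - P(x)]. *)
Lemma isunit_sub_nonroot (h : A) (P : {poly k}) (x : k) :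
  horner_alg h P = 0 -> ~~ root P x -> isunit (h - x%:A).
Proof.
move=> Ph0 nr; have : root (P - P.[x]%:P) x by rewrite /root !hornerE subrr.
case/factor_theorem => Q EQ.
have hQ : horner_alg h Q * (h - x%:A) = - P.[x]%:A /\ (h - x%:A) * horner_alg h Q = - P.[x]%:A.
  have E : horner_alg h ('X - x%:P) = h - x%:A by rewrite rmorphB /= horner_algX horner_algC.
  by rewrite -E -!rmorphM /= [('X - _) * _]mulrC -EQ rmorphB /= Ph0 horner_algC sub0r.
exists (- (P.[x])^-1 *: horner_alg h Q); rewrite -scalerAl -scalerAr hQ.1 hQ.2.
by rewrite scalerN scaleNr opprK scalerA mulVf // scale1r.
Qed.

Lemma findim_unit_shift : infinite_field k -> Hs_findim A ->
  forall h : A, exists t : k, isunit (h + t%:A).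
Proof.
move=> inf fA h; have [P nzP Ph0] := algebraic_of_findim fA h.
have [x nr] := infinite_field_nonroot inf nzP.
by exists (- x); rewrite scaleNr; apply: isunit_sub_nonroot Ph0 nr.
Qed.

End UnitShift.

(* [h + t] fails to be a unit only if [iota_i t = - h_i] for some [i], which
   excludes at most one [t] per factor *)
Lemma prodfields_unit_shift (k : fieldType) (A : algType k) : infinite_field k ->
  Hs_prodfields A -> forall h : A, exists t : k, isunit (h + t%:A).
Proof.
move=> inf [n [L [iota [ph [[g phK gK] ph1 phD phM phZ]]]]] h.
have /fin_all_exists [b bP] i : exists b : k, forall s, iota i s = - ph h i -> s = b.
  case: (pselect (exists s, iota i s = - ph h i)) => [[s0 Hs0]|ns].
    by exists s0 => s Hs; apply: (fmorph_inj (iota i)); rewrite Hs Hs0.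
  by exists 0 => s Hs; case: ns; exists s.
have [t tb] := inf [seq b i | i <- enum 'I_n].
have nz i : ph h i + iota i t != 0.
  apply/negP => /eqP E; move: tb; rewrite (bP i t) ?map_f ?mem_enum //.
  by apply/eqP; rewrite -addr_eq0 addrC E.
have pht : ph (h + t%:A) = fun i => ph h i + iota i t.
  by rewrite phD phZ ph1; apply: functional_extensionality_dep => i /=; rewrite mulr1.
exists t, (g (fun i => (ph h i + iota i t)^-1)); split; apply: (can_inj phK);
  rewrite phM ph1 pht gK; apply: functional_extensionality_dep => i /=.
  by rewrite mulfV ?nz.
by rewrite mulVf ?nz.
Qed.

Lemma geometric_tail_half (R : realFieldType) (n m : nat) : (n <= m)%N ->
  \sum_(n <= j < m) (2^-1 : R) ^+ j <= 2 * 2^-1 ^+ n - 2 * 2^-1 ^+ m.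
Proof.
move=> /subnKC <-; elim: (m - n)%N => [|d IH]; first by rewrite addn0 big_geq // subrr.
rewrite addnS big_nat_recr ?leq_addr //=; apply: le_trans (lerD IH (lexx _)) _.
rewrite exprS mulrA divff ?pnatr_eq0 // mul1r [2 * _]mulr_natl mulr2n; lra.
Qed.

Lemma exp_half_small (R : archiFieldType) (e : R) : 0 < e ->
  exists M : nat, forall m, (M <= m)%N -> 2 * (2^-1 : R) ^+ m < e.
Proof.
move=> e0; have b0 : 0 <= 2 / e by rewrite divr_ge0 // ltW.
exists (Num.bound (2 / e)) => m Mm.
have h1 : 2 / e < (2 ^ m)%:R.
  apply: lt_le_trans (archi_boundP b0) _; rewrite ler_nat.
  by apply: leq_trans Mm _; apply: ltnW; apply: ltn_expl.
have p0 : (0 : R) < (2 ^ m)%:R by rewrite ltr0n expn_gt0.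
rewrite ltr_pdivrMr // in h1.
by rewrite exprVn -natrX ltr_pdivrMr //; lra.
Qed.

Section Neumann.
Variables (k : fieldType) (A : algType k) (R : realType) (absk : k -> R) (N : A -> R).
Hypotheses (absN1 : absk (-1) = 1) (N_ge0 : forall x, 0 <= N x)
  (N_eq0 : forall x, N x = 0 <-> x = 0) (N_triangle : forall x y, N (x + y) <= N x + N y)
  (NZ : forall (a : k) x, N (a *: x) = absk a * N x)
  (NM : forall x y, N (x * y) <= N x * N y)
  (N_complete : forall u : nat -> A,
     (forall e : R, 0 < e -> exists M, forall m n, (M <= m)%N -> (M <= n)%N ->
        N (u m - u n) < e) ->
     exists l : A, forall e : R, 0 < e -> exists M, forall n, (M <= n)%N -> N (u n - l) < e).

Lemma normN x : N (- x) = N x.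
Proof. by rewrite -scaleN1r NZ absN1 mul1r. Qed.

Lemma norm_sum_le (r : seq nat) (F : nat -> A) :
  N (\sum_(i <- r) F i) <= \sum_(i <- r) N (F i).
Proof.
elim: r => [|a r IH]; first by rewrite !big_nil (proj2 (N_eq0 0) erefl).
by rewrite !big_cons; apply: le_trans (N_triangle _ _) (lerD (lexx _) IH).
Qed.

Lemma norm_small_eq0 x : (forall e, 0 < e -> N x <= e) -> x = 0.
Proof.
move=> small; apply/N_eq0; have [Nx0|] := ltP 0 (N x); last by have := N_ge0 x; lra.
by have := small _ (divr_gt0 Nx0 (ltr0Sn _ 1)); lra.
Qed.

Definition neumann_sum (y : A) (m : nat) := \sum_(0 <= j < m) y ^+ j.

Variable y : A.
Hypothesis Ny : N y <= 2^-1.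
Local Notation S := (neumann_sum y).

Lemma norm_exp_half j : (1 <= j)%N -> N (y ^+ j) <= 2^-1 ^+ j.
Proof.
case: j => // j _; elim: j => [|j IH]; first by rewrite !expr1.
rewrite exprSr [X in _ <= X]exprSr; apply: le_trans (NM _ _) _.
by apply: ler_pM => //; apply: N_ge0.
Qed.

Lemma neumann_sum_cauchy n m : (1 <= n)%N -> (n <= m)%N ->
  N (S m - S n) <= 2 * 2^-1 ^+ n - 2 * 2^-1 ^+ m.
Proof.
move=> n1 nm; rewrite /neumann_sum (big_cat_nat (n := n)) //= addrC addrK.
apply: le_trans (norm_sum_le _ _) (le_trans _ (geometric_tail_half R nm)).
by apply: ler_sum_nat => j /andP [nj _]; apply: norm_exp_half; apply: leq_trans nj.
Qed.

Lemma neumann_sum_cvg : exists l, forall e : R, 0 < e ->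
  exists M, forall n, (M <= n)%N -> N (S n - l) < e.
Proof.
apply: N_complete => e e0; have [M HM] := exp_half_small e0.
have hpos j : (0 : R) <= 2^-1 ^+ j by apply: exprn_ge0; rewrite invr_ge0.
exists M.+1 => m n Mm Mn; have [nm|mn] := leqP n m.
  apply: le_lt_trans (neumann_sum_cauchy (leq_trans _ Mn) nm) _ => //.
  by have := HM n (ltnW Mn); have := hpos m; lra.
rewrite -normN opprB; apply: le_lt_trans (neumann_sum_cauchy (leq_trans _ Mm) (ltnW mn)) _ => //.
by have := HM m (ltnW Mm); have := hpos n; lra.
Qed.

Lemma neumann_sum_telescope m :
  (1 - y) * S m = 1 - y ^+ m /\ S m * (1 - y) = 1 - y ^+ m.
Proof.
rewrite /neumann_sum; elim: m => [|m [IHl IHr]]; first by rewrite big_geq // mulr0 mul0r subrr.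
rewrite big_nat_recr //=; split.
  by rewrite mulrDr IHl mulrBl mul1r -exprS addrA subrK.
by rewrite mulrDl IHr mulrBr mulr1 -exprSr addrA subrK.
Qed.

(* [g] stands for multiplication by [1 - y] on either side *)
Lemma neumann_limit_inverse (g : A -> A) (l : A) :
  (forall x, N (g x) <= N (1 - y) * N x) -> (forall x x', g (x - x') = g x - g x') ->
  (forall m, g (S m) = 1 - y ^+ m) ->
  (forall e : R, 0 < e -> exists M, forall n, (M <= n)%N -> N (S n - l) < e) ->
  g l = 1.
Proof.
move=> gN gB gS Sl; apply/eqP; rewrite -subr_eq0; apply/eqP/norm_small_eq0 => e e0.
pose c := N (1 - y); have c0 : 0 <= c by apply: N_ge0.
pose e1 := e / (2 * (c + 1)).
have e10 : 0 < e1 by rewrite divr_gt0 // mulr_gt0 // ltr_wpDl.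
have ce1 : (c + 1) * e1 = e / 2 by rewrite /e1; field; lra.
have [M1 HM1] := Sl _ e10; have [M2 HM2] := exp_half_small e0.
pose m := maxn M1 M2.+1.
have -> : g l - 1 = g (l - S m) - y ^+ m by rewrite gB gS opprB addrA addrAC addrK.
apply: le_trans (N_triangle _ _) _; rewrite normN.
have h1 : N (l - S m) < e1 by rewrite -normN opprB; apply: HM1; rewrite leq_maxl.
have h2 : c * N (l - S m) <= c * e1 by apply: ler_wpM2l => //; apply: ltW.
have h3 := norm_exp_half (leq_trans (ltn0Sn _) (leq_maxr M1 M2.+1)).
have h4 := HM2 m (ltnW (leq_maxr M1 M2.+1)).
by have := gN (l - S m); rewrite -/c; lra.
Qed.

Lemma neumann_isunit : isunit (1 - y).
Proof.
have [l Sl] := neumann_sum_cvg; exists l; split.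
  apply: (@neumann_limit_inverse ( *%R (1 - y)) l _ _ _ Sl) => [x|x x'|m] /=.
  - exact: NM.
  - by rewrite mulrBr.
  - by case: (neumann_sum_telescope m).
apply: (@neumann_limit_inverse ( *%R^~ (1 - y)) l _ _ _ Sl) => [x|x x'|m] /=.
- by rewrite mulrC; apply: NM.
- by rewrite mulrBl.
- by case: (neumann_sum_telescope m).
Qed.

End Neumann.

Lemma banach_unit_shift (R : realType) (k : fieldType) (A : algType k) (absk : k -> R) :
  (forall eps : R, 0 < eps -> exists s, absk s = eps) ->
  banach_norm A absk -> forall h : A, exists t : k, isunit (h + t%:A).
Proof.
move=> abs_onto [N [[N_ge0 N_eq0] N_triangle NZ NM N_complete]] h.
have [A0|A1] := eqVneq (1 : A) 0; first by exists 0, 0; rewrite mulr0 mul0r A0.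
have N1 : 0 < N 1 by rewrite lt_def N_ge0 andbT; apply: contra_neq A1 => /N_eq0.
have absN1 : absk (-1) = 1.
  have : N 1 = absk (-1) * (absk (-1) * N 1) by rewrite -!NZ scalerA mulrNN mulr1 scale1r.
  have : 0 <= absk (-1) * N 1 by rewrite -NZ N_ge0.
  nra.
(* rescale [h] into the ball of radius 1/2, where the Neumann series converges *)
pose eps := (2 * (N h + 1))^-1; have Nh0 := N_ge0 h.
have eps0 : 0 < eps by rewrite invr_gt0 mulr_gt0 // ltr_wpDl.
have [s As] := abs_onto _ eps0.
have s0 : s != 0.
  apply: contraTneq eps0 => s0; have := NZ s 1.
  rewrite As s0 scale0r (proj2 (N_eq0 0) erefl) => /esym/eqP.
  by rewrite mulf_eq0 (gt_eqF N1) orbF => /eqP ->; rewrite ltxx.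
have Nsh : N (s *: h) <= 2^-1.
  have : eps * (N h + 1) = 2^-1 by rewrite /eps; field; lra.
  by rewrite NZ As; nra.
have [z [zu uz]] := neumann_isunit absN1 N_ge0 N_eq0 N_triangle NZ NM N_complete Nsh.
exists (- s^-1); have -> : h + (- s^-1)%:A = (- s^-1) *: (1 - s *: h).
  by rewrite scalerBr scalerA mulNr mulVf // scaleN1r opprK addrC.
exists ((- s) *: z).
by split; rewrite -scalerAl -scalerAr ?zu ?uz scalerA mulrNN ?mulVf ?mulfV // scale1r.
Qed.

Lemma unit_shift (R : realType) (k : fieldType) (A : algType k) :
  infinite_field k -> Hs A R -> forall h : A, exists t : k, isunit (h + t%:A).
Proof.
move=> inf [fA|[[f [[g fK gK] bA]]|[f [[g fK gK] bA]]]|pA].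
- exact: findim_unit_shift.
- apply: banach_unit_shift bA => eps eps0.
  by exists (g eps); rewrite /= gK gtr0_norm.
- apply: banach_unit_shift bA => eps eps0; exists (g (complex.Complex eps 0)).
  by rewrite /= gK /absC /= expr0n addr0 sqrtr_sqr gtr0_norm.
- exact: prodfields_unit_shift.
Qed.
Theorem proposition5p2 (R : realType) (k : fieldType) (A : algType k)
  (V : set A) (lambda : R) :
  infinite_field k -> Hs A R -> fdsub V -> meets_units V ->
  0 < lambda -> lambda <= 1 ->
  exists H : set A,
  [/\ (* (1) *) atom V lambda H /\ H 1 /\
        (forall H' : set A, atom V lambda H' -> H' 1 -> H' = H),
      (* (2) *) subalgebra H /\ Hl V `<=` H,
      (* (3) *) (forall X : set A, (atom V lambda X /\ meets_units X) <->
                   exists x : A, isunit x /\ X = [set x * h | h in H]) &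
      (* (4) *) (forall W : set A, admissible W ->
                   lambda * (dimk W)%:R + (dimk V)%:R - lambda * (dimk H)%:R
                   <= (dimk (setmul W V))%:R)].
Proof.
move=> k_inf hs fV uV lambda_gt0 lambda_le1.
have [H atH H1] := atom1_exists fV uV lambda_le1.
exists H; split.
- split=> //; split=> // H' atH' H'1.
  exact: (atom1_unique fV uV lambda_le1 atH H1 atH' H'1).
- split; first exact: (atom1_subalgebra fV uV lambda_le1 atH H1 (unit_shift k_inf hs)).
  exact: (Hl_sub_atom1 fV uV lambda_le1 atH H1 lambda_gt0).
- exact: (atom_meets_unitsP fV uV lambda_le1 atH H1).
- move=> W aW; exact: (dimk_setmul_lower_bound fV uV lambda_le1 atH H1 aW).
Qed.
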